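(* Let $G$ be a (discrete) group and $H$ a Hecke subgroup of $G$ such that the discrete Hecke pair $(G,H)$ is finitely generated. Then there exists a locally bounded and proper length function on $(G,H)$, i.e. a length function $l$ on $G$ with $l|_H=0$ such that for every $n$ the set $\{Hx\in H\backslash G: l(x)\le n\}$ is finite.
   Context: $H$ is a Hecke subgroup of a group $G$ if $[H:H\cap xHx^{-1}]<\infty$ for all $x\in G$. A length function on $G$ is a function $l:G\to[0,\infty)$ with $l(e)=0$, $l(g)=l(g^{-1})$, $l(gh)\le l(g)+l(h)$; it is a length function on $(G,H)$ if $l$ vanishes on $H$. The pair $(G,H)$ is finitely generated if there is a finite set $S\subseteq G$ with $H\backslash G=\bigcup_{n\in\mathbb N}H\hat S^n$, where $\hat S=S\cup S^{-1}\cup\{e\}$. (For discrete pairs local boundedness is automatic and properness means finiteness of the sets above.) *)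

From Stdlib Require Import Reals List.
Open Scope R_scope.

Record Group := MkGroup {
  carrier :> Type;
  gmul : carrier -> carrier -> carrier;
  ginv : carrier -> carrier;
  gone : carrier;
  gmul_assoc : forall x y z, gmul x (gmul y z) = gmul (gmul x y) z;
  gmul_1l : forall x, gmul gone x = x;
  gmul_1r : forall x, gmul x gone = x;
  gmul_Vl : forall x, gmul (ginv x) x = gone;
  gmul_Vr : forall x, gmul x (ginv x) = gone
}.

Arguments gmul {g} _ _.
Arguments ginv {g} _.
Arguments gone {g}.

Definition is_subgroup (G : Group) (H : G -> Prop) : Prop :=
  H gone /\ (forall x y, H x -> H y -> H (gmul x y)) /\ (forall x, H x -> H (ginv x)).

Definition finite_index_in (G : Group) (H K : G -> Prop) : Prop :=
  exists l : list G, (forall y, In y l -> H y) /\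
    forall h, H h -> exists y, In y l /\ K (gmul (ginv y) h).

(* x H x^{-1} as a predicate: z \in xHx^{-1} iff x^{-1} z x \in H. *)
Definition conj_set (G : Group) (H : G -> Prop) (x : G) : G -> Prop :=
  fun z => H (gmul (gmul (ginv x) z) x).

Definition is_hecke_subgroup (G : Group) (H : G -> Prop) : Prop :=
  is_subgroup G H /\
  forall x : G, finite_index_in G H (fun z => H z /\ conj_set G H x z).

Fixpoint word_prod (G : Group) (w : list G) : G :=
  match w with
  | nil => gone
  | s :: w' => gmul s (word_prod G w') end.

Definition hatS (G : Group) (S : list G) (y : G) : Prop :=
  In y S \/ In (ginv y) S \/ y = gone.

(* (G,H) finitely generated: a finite S with H\G = ⋃_n H \hat S^n,
   i.e. every x ∈ G lies in H s_1 ... s_n with s_i ∈ \hat S. *)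
Definition pair_finitely_generated (G : Group) (H : G -> Prop) : Prop :=
  exists S : list G, forall x : G,
    exists (h : G) (w : list G), H h /\ (forall s, In s w -> hatS G S s) /\
      x = gmul h (word_prod G w).

Definition is_length_function (G : Group) (l : G -> R) : Prop :=
  (forall g, 0 <= l g) /\ l gone = 0 /\
  (forall g, l g = l (ginv g)) /\
  (forall g h, l (gmul g h) <= l g + l h).

Definition is_length_function_pair (G : Group) (H : G -> Prop) (l : G -> R) : Prop :=
  is_length_function G l /\ forall h, H h -> l h = 0.

(* Proper (discrete case): for each n, {Hx ∈ H\G : l(x) <= n} is finite, i.e.
   finitely many representatives y with Hx = Hy (x y^{-1} ∈ H). *)
Definition is_proper_length (G : Group) (H : G -> Prop) (l : G -> R) : Prop :=
  forall n : nat, exists L : list G, forall x : G,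
    l x <= INR n -> exists y, In y L /\ H (gmul x (ginv y)).

(* Let B_n = (H Ŝ)^n H.  These sets exhaust G, contain e, are symmetric and satisfy
   B_m B_n ⊆ B_(m+n), so l(x) = min {n | x ∈ B_n} is a length function vanishing
   on H.  Properness: by the Hecke condition every double coset H z H is a finite
   union of right cosets H y, hence by induction so is each B_n. *)
From Stdlib Require Import Reals List Arith Classical ClassicalEpsilon.
Open Scope R_scope.

Section GroupFacts.
Variable G : Group.

Lemma ginv_uniq (a b : G) : gmul a b = gone -> ginv a = b.
Proof.
  intro ab1.
  rewrite <- (gmul_1r G (ginv a)), <- ab1, gmul_assoc, gmul_Vl, gmul_1l.
  reflexivity.
Qed.

Lemma ginvK (x : G) : ginv (ginv x) = x.
Proof. apply ginv_uniq, gmul_Vl. Qed.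

Lemma ginvM (x y : G) : ginv (gmul x y) = gmul (ginv y) (ginv x).
Proof.
  apply ginv_uniq.
  rewrite !gmul_assoc, <- (gmul_assoc G x y), gmul_Vr, gmul_1r, gmul_Vr.
  reflexivity.
Qed.

Lemma ginv1 : ginv (@gone G) = gone.
Proof. apply ginv_uniq, gmul_1l. Qed.

Lemma gmulK (x y : G) : gmul (gmul x y) (ginv y) = x.
Proof. rewrite <- gmul_assoc, gmul_Vr, gmul_1r. reflexivity. Qed.

End GroupFacts.

Section FiltrationLength.
Variables (G : Group) (B : nat -> G -> Prop).

Definition filtration_length (x : G) : nat :=
  epsilon (inhabits 0%nat) (fun n => B n x /\ forall m, B m x -> (n <= m)%nat).

Hypothesis B_exhaustive : forall x, exists n, B n x.

Lemma filtration_length_least (x : G) :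
  B (filtration_length x) x /\ forall m, B m x -> (filtration_length x <= m)%nat.
Proof.
  unfold filtration_length; apply epsilon_spec.
  destruct (dec_inh_nat_subset_has_unique_least_element (fun n => B n x))
    as [n [least_n _]]; [intro; apply classic | apply B_exhaustive | now exists n].
Qed.

Lemma filtration_length_0 (x : G) : B 0 x -> filtration_length x = 0%nat.
Proof.
  intro B0x; apply Nat.le_0_r; now apply filtration_length_least.
Qed.

Hypothesis B_one : B 0 gone.
Hypothesis B_mul : forall m n x y, B m x -> B n y -> B (m + n) (gmul x y).
Hypothesis B_inv : forall n x, B n x -> B n (ginv x).

Lemma filtration_length_inv_le (x : G) :
  (filtration_length (ginv x) <= filtration_length x)%nat.
Proof. apply filtration_length_least, B_inv, filtration_length_least. Qed.

Lemma filtration_length_is_length :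
  is_length_function G (fun x => INR (filtration_length x)).
Proof.
  split; [|split; [|split]].
  - intro x; apply pos_INR.
  - now rewrite filtration_length_0.
  - intro x; f_equal; apply Nat.le_antisymm.
    + rewrite <- (ginvK G x) at 1; apply filtration_length_inv_le.
    + apply filtration_length_inv_le.
  - intros x y; rewrite <- plus_INR; apply le_INR, filtration_length_least.
    apply B_mul; apply filtration_length_least.
Qed.

End FiltrationLength.

Section HeckeBalls.
Variables (G : Group) (H : G -> Prop) (gens : list G).
Hypothesis H_one : H gone.
Hypothesis H_mul : forall x y, H x -> H y -> H (gmul x y).
Hypothesis H_inv : forall x, H x -> H (ginv x).

Fixpoint ball (n : nat) : G -> Prop :=
  match n with
  | O => H
  | S n => fun x => exists h s y,
      H h /\ hatS G gens s /\ ball n y /\ x = gmul (gmul h s) y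
  end.

Lemma hatS_one : hatS G gens gone.
Proof. now right; right. Qed.

Lemma hatS_inv (s : G) : hatS G gens s -> hatS G gens (ginv s).
Proof.
  intros [s_in | [s_in | ->]].
  - now right; left; rewrite ginvK.
  - now left.
  - now right; right; rewrite ginv1.
Qed.

Lemma ball_mulHl (n : nat) (h x : G) : H h -> ball n x -> ball n (gmul h x).
Proof.
  destruct n as [|n]; intros Hh bx; [now apply H_mul|].
  destruct bx as (h' & s & y & Hh' & hs & by_ & ->).
  exists (gmul h h'), s, y; repeat split; auto.
  now rewrite !gmul_assoc.
Qed.

Lemma ball_mul (m n : nat) (x y : G) :
  ball m x -> ball n y -> ball (m + n) (gmul x y).
Proof.
  revert x; induction m as [|m IH]; intros x bx by_; [now apply ball_mulHl|].
  destruct bx as (h & s & x' & Hh & hs & bx' & ->).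
  exists h, s, (gmul x' y); repeat split; auto.
  now rewrite gmul_assoc.
Qed.

Lemma ball_inv (n : nat) (x : G) : ball n x -> ball n (ginv x).
Proof.
  revert x; induction n as [|n IH]; intros x bx; [now apply H_inv|].
  destruct bx as (h & s & y & Hh & hs & by_ & ->).
  rewrite <- Nat.add_1_r, !ginvM.
  apply ball_mul; [now apply IH|].
  exists gone, (ginv s), (ginv h); repeat split; simpl; auto using hatS_inv.
  now rewrite gmul_1l.
Qed.

Lemma ball_succ (n : nat) (x : G) : ball n x -> ball (S n) x.
Proof.
  intro bx; exists gone, gone, x; repeat split; auto using hatS_one.
  now rewrite !gmul_1l.
Qed.

Lemma ball_mono (m n : nat) (x : G) : (m <= n)%nat -> ball m x -> ball n x.
Proof. intro mn; induction mn; auto using ball_succ. Qed.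

Lemma ball_word_prod (w : list G) :
  (forall s, In s w -> hatS G gens s) -> ball (length w) (word_prod G w).
Proof.
  induction w as [|s w IH]; intro w_gens; [exact H_one|].
  exists gone, s, (word_prod G w); repeat split; auto using in_eq, in_cons.
  now rewrite gmul_1l.
Qed.

Hypothesis gens_generate : forall x : G, exists h w, H h /\
  (forall s, In s w -> hatS G gens s) /\ x = gmul h (word_prod G w).

Lemma ball_exhaustive (x : G) : exists n, ball n x.
Proof.
  destruct (gens_generate x) as (h & w & Hh & w_gens & ->).
  exists (length w); now apply ball_mulHl, ball_word_prod.
Qed.

Definition in_cosets (L : list G) (x : G) : Prop :=
  exists y, In y L /\ H (gmul x (ginv y)).

Lemma in_cosets_incl (L1 L2 : list G) (x : G) :
  incl L1 L2 -> in_cosets L1 x -> in_cosets L2 x.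
Proof. intros sub (y & yL & Hxy); exists y; auto. Qed.

Lemma in_cosets_mulr (L : list G) (x z : G) :
  in_cosets L x -> in_cosets (map (fun y => gmul y z) L) (gmul x z).
Proof.
  intros (y & yL & Hxy); exists (gmul y z).
  split; [now apply (in_map (fun y0 => gmul y0 z))|].
  now rewrite ginvM, gmul_assoc, gmulK.
Qed.

Hypothesis hecke : forall x, finite_index_in G H (fun z => H z /\ conj_set G H x z).

(* H = ⋃ y (H ∩ z^-1 H z) over finitely many y; then a z b ∈ H z y^-1 whenever
   b^-1 ∈ y (H ∩ z^-1 H z). *)
Lemma double_coset_cover (z : G) :
  exists R, forall a b, H a -> H b -> in_cosets R (gmul (gmul a z) b).
Proof.
  destruct (hecke (ginv z)) as (l & _ & l_covers).
  exists (map (fun y => gmul z (ginv y)) l); intros a b Ha Hb.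
  destruct (l_covers (ginv b) (H_inv b Hb)) as (y & yl & _ & Hconj).
  unfold conj_set in Hconj; rewrite ginvK in Hconj.
  exists (gmul z (ginv y)); split; [now apply (in_map (fun y0 => gmul z (ginv y0)))|].
  replace (gmul (gmul (gmul a z) b) (ginv (gmul z (ginv y))))
    with (gmul a (ginv (gmul (gmul z (gmul (ginv y) (ginv b))) (ginv z)))).
  - now apply H_mul, H_inv.
  - now rewrite !ginvM, !ginvK, !gmul_assoc.
Qed.

Lemma double_cosets_cover (Z : list G) : exists R, forall z a b,
  In z Z -> H a -> H b -> in_cosets R (gmul (gmul a z) b).
Proof.
  induction Z as [|z Z [R R_covers]]; [now exists nil|].
  destruct (double_coset_cover z) as [Rz Rz_covers].
  exists (Rz ++ R); intros z' a b [<- | z'Z] Ha Hb.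
  - apply (in_cosets_incl Rz); auto using incl_appl, incl_refl.
  - apply (in_cosets_incl R); auto using incl_appr, incl_refl.
Qed.

Definition hatS_list : list G := gone :: gens ++ map ginv gens.

Lemma hatS_in_list (s : G) : hatS G gens s -> In s hatS_list.
Proof.
  unfold hatS_list; intros [s_in | [s_in | ->]]; [| |now left]; right; apply in_or_app.
  - now left.
  - right; apply in_map_iff; exists (ginv s); now rewrite ginvK.
Qed.

Lemma ball_in_cosets (n : nat) : exists L, forall x, ball n x -> in_cosets L x.
Proof.
  induction n as [|n [L L_covers]].
  - exists (gone :: nil); intros h Hh; exists gone; split; [now left|].
    now rewrite ginv1, gmul_1r.
  - destruct (double_cosets_cover hatS_list) as [R R_covers].
    exists (flat_map (fun y0 => map (fun r => gmul r y0) R) L).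
    intros x (h & s & y & Hh & hs & by_ & ->).
    destruct (L_covers y by_) as (y0 & y0L & Hyy0).
    replace (gmul (gmul h s) y)
      with (gmul (gmul (gmul h s) (gmul y (ginv y0))) y0)
      by now rewrite <- !gmul_assoc, gmul_Vl, gmul_1r.
    apply (in_cosets_incl (map (fun r => gmul r y0) R)).
    + intros u u_in; apply in_flat_map; now exists y0.
    + apply in_cosets_mulr, R_covers; auto using hatS_in_list.
Qed.

End HeckeBalls.

Theorem lemma2p11 (G : Group) (H : G -> Prop) :
  is_hecke_subgroup G H ->
  pair_finitely_generated G H ->
  exists l : G -> R, is_length_function_pair G H l /\ is_proper_length G H l.
Proof.
  intros [[H_one [H_mul H_inv]] hecke] [gens gens_generate].
  pose (B := ball G H gens).
  assert (B_exhaustive : forall x, exists n, B n x)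
    by (intro; apply ball_exhaustive; assumption).
  exists (fun x => INR (filtration_length G B x)); split; [split|].
  - apply filtration_length_is_length; try assumption.
    + intros m n x y; apply ball_mul; assumption.
    + intros n x; apply ball_inv; assumption.
  - intros h Hh; now rewrite filtration_length_0.
  - intro n; destruct (ball_in_cosets G H gens) with (n := n) as [L L_covers];
      try assumption.
    exists L; intros x len_x; apply L_covers.
    apply ball_mono with (m := filtration_length G B x); try assumption.
    + now apply INR_le.
    + now apply filtration_length_least.
Qed.
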